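(* For integers $N\ge 1$ and $n\ge 1$, $$B_{N,n}=n!\sum_{k=1}^{n}\ \sum_{\substack{i_1+\cdots+i_k=n\\ i_1,\dots,i_k\ge 1}}\frac{(-N!)^k}{(N+i_1)!\cdots(N+i_k)!},$$ where the inner sum runs over all $k$-tuples of positive integers $(i_1,\dots,i_k)$ with sum $n$.
   Context: For a positive integer $N$, the hypergeometric Bernoulli numbers $B_{N,n}$ ($n\ge 0$) are defined by $$\frac{x^N/N!}{e^x-\sum_{n=0}^{N-1}x^n/n!}=\sum_{n=0}^\infty B_{N,n}\frac{x^n}{n!}.$$ *)

From HB Require Import structures.
From mathcomp Require Import all_boot all_order all_algebra.
Set Implicit Arguments. Unset Strict Implicit. Unset Printing Implicit Defensive.
Import Order.TTheory GRing.Theory Num.Theory.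
Local Open Scope ring_scope.

(* Coefficient of x^k in the formal power series e^x - sum_{n<N} x^n/n! . *)
Definition trunc_exp_coef {R : numFieldType} (N k : nat) : R :=
  if (N <= k)%N then (k`!%:R)^-1 else 0.

(* B : nat -> R is the sequence of hypergeometric Bernoulli numbers B_{N,n},
   i.e. (as formal power series)
     (sum_n B n x^n/n!) * (e^x - sum_{n<N} x^n/n!) = x^N / N!,
   written coefficientwise via the Cauchy product. *)
Definition is_hyp_bernoulli {R : numFieldType} (N : nat) (B : nat -> R) : Prop :=
  forall m : nat,
    \sum_(j < m.+1) (B j / (j`!)%:R) * trunc_exp_coef N (m - j)
    = if m == N then ((N`!)%:R)^-1 else 0.

(* Since e^x - \sum_(n < N) x^n / n! = x^N / N! * E(x) with
   E(x) = \sum_i N! / (N + i)! x^i, the defining relation says that the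
   exponential generating function of the B_{N,n} is 1 / E = 1 / (1 - P), where
   P = 1 - E has no constant term.  Hence it equals \sum_k P^k, and the
   coefficient of x^n in P^k is a sum over the compositions of n into k positive
   parts of products of the coefficients -N! / (N + i)! of P.  Only coefficients
   up to x^n matter, so truncated polynomials stand in for power series. *)

From HB Require Import structures.
From mathcomp Require Import all_boot all_order all_algebra.
From mathcomp Require Import zify.
Import Order.TTheory GRing.Theory Num.Theory.
Local Open Scope ring_scope.

Section TruncatedPowerSeries.

Context {R : comNzRingType}.
Implicit Types (p a b e : {poly R}) (n m k : nat).

Lemma coef_expr_eq0 p k m : p`_0 = 0 -> (m < k)%N -> (p ^+ k)`_m = 0.
Proof.
move=> p0; elim: k m => [|k IHk] m // lt_mk.
rewrite exprS coefM big1 // => -[[|j] /= lt_jm] _; first by rewrite p0 mul0r.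
by rewrite IHk ?mulr0 //; lia.
Qed.

Lemma coef_geom_sum_mul p n m : p`_0 = 0 -> (m <= n)%N ->
  ((\sum_(k < n.+1) p ^+ k) * (1 - p))`_m = (m == 0)%:R.
Proof.
move=> p0 le_mn; rewrite mulrC -opprB mulNr -subrX1 opprB coefB coef1.
by rewrite coef_expr_eq0 ?subr0.
Qed.

Lemma trunc_mulr_inj e a b n : e`_0 = 1 ->
    (forall m, (m <= n)%N -> (a * e)`_m = (b * e)`_m) ->
  forall m, (m <= n)%N -> a`_m = b`_m.
Proof.
move=> e0 eq_ae_be; elim/ltn_ind=> m IHm le_mn.
have := eq_ae_be m le_mn; rewrite !coefM !big_ord_recr /= subnn e0 !mulr1.
rewrite (eq_bigr (fun j : 'I_m => b`_j * e`_(m - j))) => [/addrI //|j _].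
by rewrite IHm // (leq_trans (ltnW (ltn_ord j))).
Qed.

Lemma coef_expr_compositions p n k : (size p <= n.+1)%N -> p`_0 = 0 ->
  (p ^+ k)`_n =
    \sum_(t : {ffun 'I_k -> 'I_n.+1} |
            ((\sum_(i < k) (t i : nat))%N == n) && [forall i, (0 < t i)%N])
      \prod_(i < k) p`_(t i).
Proof.
move=> size_p p0.
have p_def : p = \sum_(j < n.+1) p`_j *: 'X^j.
  rewrite -poly_def; apply/polyP => j; rewrite coef_poly.
  by case: ltnP => // le_nj; rewrite nth_default // (leq_trans size_p).
have -> : p ^+ k = \prod_(i < k) \sum_(j < n.+1) p`_j *: 'X^j.
  by rewrite prodr_const card_ord -p_def.
rewrite bigA_distr_bigA /=.
under eq_bigr do rewrite scaler_prod prodrXr.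
rewrite coef_sumMXn [RHS]big_mkcondr; apply: eq_bigr => t _.
case: ifPn => // /forallPn[i]; rewrite lt0n negbK => /eqP ti0.
by rewrite (bigD1 i) //= ti0 p0 mul0r.
Qed.

End TruncatedPowerSeries.

Section HypergeometricBernoulli.

Context {R : numFieldType} (N : nat) (B : nat -> R).
Hypothesis hB : is_hyp_bernoulli N B.

Lemma natr_fact_neq0 k : (k`!%:R : R) != 0.
Proof. by rewrite pnatr_eq0 -lt0n fact_gt0. Qed.

Definition egf_trunc n : {poly R} := \poly_(j < n.+1) (B j / j`!%:R).

Definition exp_tail_quot n : {poly R} := \poly_(i < n.+1) (N`!%:R / (N + i)%N`!%:R).

Lemma hyp_bernoulli_conv m :
  \sum_(j < m.+1) B j / j`!%:R / (N + (m - j))%N`!%:R = (m == 0)%:R / N`!%:R.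
Proof.
have le_m_Nm : (m.+1 <= (N + m).+1)%N by rewrite ltnS leq_addl.
have := hB (N + m)%N.
rewrite (_ : (N + m == N) = (m == 0)%N); last by rewrite -[X in _ == X]addn0 eqn_add2l.
rewrite (_ : _ / _ = if m == 0%N then N`!%:R^-1 else 0); last first.
  by case: eqP; rewrite ?mul1r ?mul0r.
move=> <-.
rewrite (big_ord_widen _ (fun j => B j / j`!%:R / (N + (m - j))%N`!%:R) le_m_Nm).
rewrite big_mkcond /=.
apply: eq_bigr => j _; rewrite /trunc_exp_coef ltnS.
case: leqP => [le_jm | lt_mj]; first by rewrite -addnBA // leq_addr.
by rewrite leqNgt (_ : N + m - j < N)%N ?mulr0 //; have := ltn_ord j; lia.
Qed.

Lemma coef_egf_mul_exp_tail n m : (m <= n)%N ->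
  (egf_trunc n * exp_tail_quot n)`_m = (m == 0)%:R.
Proof.
move=> le_mn; rewrite coefM -[RHS](divfK (natr_fact_neq0 N)) -hyp_bernoulli_conv.
rewrite mulr_suml; apply: eq_bigr => j _.
rewrite !coef_poly !ltnS leq_subLR (leq_trans (leq_ord j) le_mn) (leq_trans le_mn) ?leq_addl //.
by rewrite mulrA mulrAC.
Qed.

Lemma coef_exp_tail_compl n i : (0 < i <= n)%N ->
  (1 - exp_tail_quot n)`_i = - (N`!%:R / (N + i)%N`!%:R).
Proof.
by case/andP=> i_gt0 le_in; rewrite coefB coef1 coef_poly ltnS le_in eqn0Ngt i_gt0 sub0r.
Qed.

Lemma prod_coef_exp_tail_compl n k (t : 'I_k -> 'I_n.+1) :
    (forall i, 0 < t i)%N ->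
  \prod_(i < k) (1 - exp_tail_quot n)`_(t i)
    = (- (N`!)%:R) ^+ k / \prod_(i < k) ((N + t i)`!)%:R.
Proof.
move=> t_gt0; under eq_bigr => i _.
  rewrite coef_exp_tail_compl -?mulNr; last by rewrite t_gt0 -ltnS ltn_ord.
  over.
by rewrite big_split /= prodr_const card_ord prodfV.
Qed.

End HypergeometricBernoulli.

Theorem proposition2 (R : numFieldType) (N : nat) (B : nat -> R) :
  (1 <= N)%N -> is_hyp_bernoulli N B ->
  forall n : nat, (1 <= n)%N ->
  B n = (n`!)%:R *
    \sum_(1 <= k < n.+1)
      \sum_(t : {ffun 'I_k -> 'I_n.+1} |
              ((\sum_(i < k) (t i : nat))%N == n) && [forall i, (0 < t i)%N])
        ((- (N`!)%:R) ^+ k / \prod_(i < k) ((N + t i)`!)%:R).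
Proof.
(* The formula also holds for N = 0. *)
move=> _ hB n n_gt0.
set e : {poly R} := exp_tail_quot N n; set P := 1 - e.
have e0 : e`_0 = 1 by rewrite coef_poly addn0 divff ?natr_fact_neq0.
have P0 : P`_0 = 0 by rewrite coefB coef1 e0 subrr.
have size_P : (size P <= n.+1)%N.
  by rewrite (leq_trans (size_add _ _)) // geq_max size_opp size_poly size_poly1.
have egf_geom : (egf_trunc B n)`_n = (\sum_(k < n.+1) P ^+ k)`_n.
  apply: (@trunc_mulr_inj _ e _ _ n e0 _ _ (leqnn n)) => m le_mn.
  by rewrite coef_egf_mul_exp_tail // -(subKr 1 e) coef_geom_sum_mul.
have -> : B n = n`!%:R * (egf_trunc B n)`_n.
  by rewrite coef_poly ltnSn mulrC divfK ?natr_fact_neq0.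
rewrite egf_geom coef_sum -(big_mkord xpredT (fun k => (P ^+ k)`_n)) big_ltn //.
rewrite expr0 coef1 eqn0Ngt n_gt0 add0r; congr (_ * _); apply: eq_big_nat => k _.
rewrite coef_expr_compositions //; apply: eq_bigr => t /andP[_ /forallP t_gt0].
exact: prod_coef_exp_tail_compl.
Qed.
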